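(* Let $G$ be a finite simple graph on $[d]$, $k\ge1$, $<$ a monomial order on $R[G]$, and let $\{m_1,\dots,m_s\}$ be the set of all standard monomials of degree $k$ with respect to ${\rm in}_<(K_G)$. Then each $m_i$ equals ${\bf x}_{f_i}$ for a $k$-coloring $f_i$ of an induced subgraph of $G$; namely $m_i=x_{S_1}\cdots x_{S_k}$ with $S_1,\dots,S_k$ pairwise disjoint stable sets and $f_i$ is the coloring of $G[S_1\cup\dots\cup S_k]$ with $f_i(v)=\ell$ for $v\in S_\ell$. Moreover, for every induced subgraph $G'$ of $G$, the set $\{f_1,\dots,f_s\}\cap\mathcal{C}_k(G')$ is a complete representative system for ${\rm kc}(G',k)$.
   Context: A $k$-coloring of a graph $H$ is a map $f:V(H)\to[k]$ (not necessarily surjective) with $f(u)\neq f(v)$ for every edge; $\mathcal{C}_k(H)$ is the set of $k$-colorings of $H$. A Kempe switching: for colors $i<j$ and a connected component $C$ of $H[f^{-1}(i)\cup f^{-1}(j)]$, interchange $i$ and $j$ on $C$. Kempe equivalence $\sim_k$ is the equivalence relation generated by Kempe switchings, and ${\rm kc}(H,k)=\mathcal{C}_k(H)/\!\sim_k$. Colorings differing only by a permutation of colors are identified. A stable set of $G$ is a subset of $[d]$ with no edge of $G$ (including $\emptyset$ and singletons); $S(G)$ is the set of stable sets; $R[G]=\mathbb{K}[x_S : S\in S(G)]$ over a field $\mathbb{K}$, all variables of degree $1$. For a $k$-coloring $f$ of an induced subgraph, ${\bf x}_f=\prod_{\ell=1}^k x_{f^{-1}(\ell)}$. $J_G$ is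 the ideal generated by all ${\bf x}_f-{\bf x}_g$ with $f,g$ $2$-colorings of a common induced subgraph of $G$; $M_G=\langle x_Sx_T : S,T\in S(G),\ S\cap T\neq\emptyset\rangle$; $K_G=J_G+M_G$. A monomial is standard w.r.t. ${\rm in}_<(K_G)$ (the ideal generated by leading monomials of nonzero elements of $K_G$) if it does not lie in it. *)

From HB Require Import structures.
From mathcomp Require Import all_boot all_order all_algebra.
From mathcomp Require Import mpoly.
From Stdlib Require Import Relation_Operators.
Set Implicit Arguments. Unset Strict Implicit. Unset Printing Implicit Defensive.
Import GRing.Theory.
Local Open Scope ring_scope.

Definition simple_graph (d : nat) (G : rel 'I_d) : Prop :=
  ssrbool.symmetric G /\ irreflexive G.

Definition stableb (d : nat) (G : rel 'I_d) (S : {set 'I_d}) : bool :=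
  [forall u in S, forall v in S, ~~ G u v].

Definition stab (d : nat) (G : rel 'I_d) := {S : {set 'I_d} | stableb G S}.

(* Number of variables of R[G] : one variable x_S per stable set S. *)
Definition nv (d : nat) (G : rel 'I_d) : nat := #|{: stab G}|.

Definition xS (K : fieldType) (d : nat) (G : rel 'I_d) (S : stab G)
  : {mpoly K[nv G]} := 'X_(enum_rank S).

(* x_S for an arbitrary subset S (only ever used for stable S; 0 otherwise). *)
Definition xset (K : fieldType) (d : nat) (G : rel 'I_d) (S : {set 'I_d})
  : {mpoly K[nv G]} :=
  match @insub _ (stableb G) (stab G) S with
  | Some s => xS K s
  | None => 0
  end.

(* f : 'I_d -> 'I_k is a k-coloring of the induced subgraph G[W]
   (only the values on W matter). Colors [k] are 'I_k. *)
Definition coloring (d k : nat) (G : rel 'I_d) (W : {set 'I_d})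
  (f : 'I_d -> 'I_k) : Prop :=
  forall u v, u \in W -> v \in W -> G u v -> f u != f v.

Definition xf (K : fieldType) (d k : nat) (G : rel 'I_d) (W : {set 'I_d})
  (f : 'I_d -> 'I_k) : {mpoly K[nv G]} :=
  \prod_(l < k) xset K G [set v in W | f v == l].

Definition in_ideal (n : nat) (K : fieldType) (P : {mpoly K[n]} -> Prop)
  (p : {mpoly K[n]}) : Prop :=
  exists s : seq ({mpoly K[n]} * {mpoly K[n]}),
    (forall q, q \in s -> P q.2) /\ p = \sum_(q <- s) q.1 * q.2.

Definition J_gen (K : fieldType) (d : nat) (G : rel 'I_d) (p : {mpoly K[nv G]})
  : Prop :=
  exists (W : {set 'I_d}) (f g : 'I_d -> 'I_2),
    coloring G W f /\ coloring G W g /\ p = xf K G W f - xf K G W g.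

Definition M_gen (K : fieldType) (d : nat) (G : rel 'I_d) (p : {mpoly K[nv G]})
  : Prop :=
  exists S T : stab G, (val S :&: val T != set0) /\ p = xS K S * xS K T.

Definition in_KG (K : fieldType) (d : nat) (G : rel 'I_d) (p : {mpoly K[nv G]})
  : Prop :=
  in_ideal (fun q => @J_gen K d G q \/ @M_gen K d G q) p.

Definition monomial_order (n : nat) (le : rel 'X_{1..n}) : Prop :=
  [/\ reflexive le, antisymmetric le, transitive le & total le] /\
  (forall m1 m2 m3, le m1 m2 -> le (mnm_add m1 m3) (mnm_add m2 m3)) /\
  (forall m, le (@mnm0 n) m).

Definition is_lead (n : nat) (K : fieldType) (le : rel 'X_{1..n})
  (p : {mpoly K[n]}) (m : 'X_{1..n}) : Prop :=
  m \in msupp p /\ (forall m', m' \in msupp p -> le m' m).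

Definition in_initial (n : nat) (K : fieldType) (le : rel 'X_{1..n})
  (I : {mpoly K[n]} -> Prop) (p : {mpoly K[n]}) : Prop :=
  in_ideal (fun q => exists f m, I f /\ f != 0 /\ is_lead le f m /\ q = 'X_[m]) p.

Definition standard_deg (K : fieldType) (d : nat) (G : rel 'I_d)
  (le : rel 'X_{1..nv G}) (k : nat) (m : 'X_{1..nv G}) : Prop :=
  mdeg m = k /\ ~ in_initial le (@in_KG K d G) 'X_[m].

Definition swap_col (k : nat) (i j c : 'I_k) : 'I_k :=
  if c == i then j else if c == j then i else c.

Definition kempe_switch (d k : nat) (G : rel 'I_d) (W : {set 'I_d})
  (f g : 'I_d -> 'I_k) : Prop :=
  exists (i j : 'I_k) (v : 'I_d),
    let H := [set u in W | (f u == i) || (f u == j)] in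
    let eH := [rel a b | [&& a \in H, b \in H & G a b]] in
    let C := [set u | connect eH v u] in
    [/\ (i < j)%N, v \in H,
        {in C, forall u, g u = swap_col i j (f u)} &
        {in W :\: C, forall u, g u = f u}].

(* one step: a Kempe switching, or equality as colorings of G[W] *)
Definition kempe_step (d k : nat) (G : rel 'I_d) (W : {set 'I_d})
  (f g : 'I_d -> 'I_k) : Prop :=
  coloring G W f /\ coloring G W g /\ (kempe_switch G W f g \/ {in W, f =1 g}).

Definition kempe_eq (d k : nat) (G : rel 'I_d) (W : {set 'I_d})
  (f g : 'I_d -> 'I_k) : Prop :=
  Relation_Operators.clos_refl_sym_trans _ (kempe_step G W) f g.

From HB Require Import structures.
From mathcomp Require Import all_boot all_order all_algebra.
From mathcomp Require Import mpoly boolp.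
From Stdlib Require Import Relation_Operators.
Set Implicit Arguments. Unset Strict Implicit. Unset Printing Implicit Defensive.
Import GRing.Theory.
Local Open Scope ring_scope.

(* On the vertices coloured i or j, a k-coloring f restricts to a 2-coloring F, and
   x_f = x_F times the variables of the other colour classes. A Kempe switching on
   colours i, j replaces F by another 2-coloring of the same vertices, so Kempe-equivalent
   colorings have monomials congruent modulo J_G; as two distinct standard monomials are
   never congruent modulo K_G, a Kempe class holds at most one standard monomial.
   Conversely every recolouring of F is reached by Kempe switchings, and no x_f is
   divisible by a generator x_S x_T of M_G, so the linear form summing the coefficients
   of the monomials of one Kempe class vanishes on K_G. Were the least monomial of the
   class the leading monomial of g * m with g in K_G, the form would take the nonzero
   leading coefficient of g on g * m; so that least monomial is standard. Finally a
   standard monomial x_S1 ... x_Sk has pairwise disjoint S_l, or it would lie in M_G. *)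

Section IdealMembership.
Variables (n : nat) (K : fieldType) (P : {mpoly K[n]} -> Prop).
Local Notation I := (in_ideal P).

Lemma in_ideal0 : I 0.
Proof. by exists [::]; rewrite big_nil. Qed.

Lemma in_ideal_gen p : P p -> I p.
Proof.
by move=> Pp; exists [:: (1, p)]; split=> [q|]; rewrite ?big_seq1 ?mul1r // inE => /eqP->.
Qed.

Lemma in_idealD p q : I p -> I q -> I (p + q).
Proof.
move=> [s [Ps ->]] [t [Pt ->]]; exists (s ++ t); split; last by rewrite big_cat.
by move=> x; rewrite mem_cat => /orP[/Ps|/Pt].
Qed.

Lemma in_idealMl c p : I p -> I (c * p).
Proof.
move=> [s [Ps ->]]; exists [seq (c * x.1, x.2) | x <- s]; split.
  by move=> _ /mapP[x /Ps Px ->].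
by rewrite big_map big_distrr; apply: eq_bigr => x _ /=; rewrite mulrA.
Qed.

Lemma in_idealN p : I p -> I (- p).
Proof. by move/(in_idealMl (-1)); rewrite mulN1r. Qed.

End IdealMembership.

Lemma exists_seq_min (T : eqType) (le : rel T) (s : seq T) x :
  total le -> transitive le -> x \in s -> exists2 m, m \in s & {in s, forall y, le m y}.
Proof.
move=> le_total le_tr xs; case E: (sort le s) => [|m t].
  by move: xs; rewrite -(mem_sort le) E.
have /(order_path_min le_tr)/allP m_t : path le m t.
  by have := sort_sorted le_total s; rewrite E.
exists m; first by rewrite -(mem_sort le) E mem_head.
move=> y; rewrite -(mem_sort le) E inE => /predU1P[->|/m_t//].
by case/orP: (le_total m m).
Qed.

Section InitialIdeal.
Variables (n : nat) (K : fieldType) (le : rel 'X_{1..n}).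
Hypothesis le_order : monomial_order le.
Variable P : {mpoly K[n]} -> Prop.
Local Notation I := (in_ideal P).
Local Notation initial := (in_initial le I).

Lemma monomial_order_refl : reflexive le. Proof. by case: le_order => -[]. Qed.

Lemma is_leadX m : is_lead le ('X_[m] : {mpoly K[n]}) m.
Proof.
rewrite /is_lead msuppX mem_seq1; split=> // m'.
by rewrite mem_seq1 => /eqP->; apply: monomial_order_refl.
Qed.

Lemma is_lead_mulX (p : {mpoly K[n]}) m a :
  is_lead le p m -> is_lead le (p * 'X_[a]) (a + m)%MM.
Proof.
have [_ [le_addr _]] := le_order.
move=> [mp lead_m]; have msuppE := perm_mem (msuppMX p a).
split=> [|m']; rewrite msuppE; first exact: map_f.
by case/mapP=> m'' /lead_m m''m ->; rewrite ![(a + _)%MM]addmC; apply: le_addr.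
Qed.

Lemma in_initialX m : I 'X_[m] -> initial 'X_[m].
Proof.
move=> Im; apply: in_ideal_gen; exists 'X_[m], m.
by split=> //; split; [rewrite -msupp_eq0 msuppX | split=> //; apply: is_leadX].
Qed.

Lemma is_lead_binomial a b :
  a != b -> le b a -> is_lead le ('X_[a] - 'X_[b] : {mpoly K[n]}) a.
Proof.
move=> ab ba; split=> [|m].
  by rewrite mcoeff_msupp mcoeffB !mcoeffX eqxx [b == a]eq_sym (negbTE ab) subr0 oner_eq0.
rewrite mcoeff_msupp mcoeffB !mcoeffX.
have [<- _|_] := eqVneq a m; first exact: monomial_order_refl.
by have [<-|] := eqVneq b m; rewrite ?subrr ?eqxx.
Qed.

Lemma standard_congr_eq a b : ~ initial 'X_[a] -> ~ initial 'X_[b] ->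
  I ('X_[a] - 'X_[b]) -> a = b.
Proof.
have [[_ _ _ le_total] _] := le_order.
wlog ba : a b / le b a => [hwlog|].
  case/orP: (le_total a b) => [ab|]; last exact: hwlog.
  move=> Na Nb /in_idealN; rewrite opprB => Iba; apply/esym; exact: hwlog.
move=> Na _ Iab; apply/eqP/negPn/negP => ab; apply: Na; apply: in_ideal_gen.
have lead_ab := is_lead_binomial ab ba.
exists ('X_[a] - 'X_[b]), a; split=> //; split; last by split.
by apply: contraTneq lead_ab.1 => ->; rewrite msupp0.
Qed.

Section CoefficientSum.
Variables (b : nat) (C : pred 'X_{1..n}).
Hypothesis C_bounded : forall m, C m -> (mdeg m < b)%N.

(* The degree bound [b] only makes the sum finite. *)
Definition coef_sum (p : {mpoly K[n]}) : K := \sum_(m : 'X_{1..n < b}) (C m)%:R * p@_m.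

Lemma coef_sum0 : coef_sum 0 = 0.
Proof. by rewrite /coef_sum big1 // => m _; rewrite mcoeff0 mulr0. Qed.

Lemma coef_sumD p q : coef_sum (p + q) = coef_sum p + coef_sum q.
Proof. by rewrite /coef_sum -big_split; apply: eq_bigr => m _; rewrite mcoeffD mulrDr. Qed.

Lemma coef_sumB p q : coef_sum (p - q) = coef_sum p - coef_sum q.
Proof. by rewrite /coef_sum -sumrB; apply: eq_bigr => m _; rewrite mcoeffB mulrBr. Qed.

Lemma coef_sumX m : coef_sum 'X_[m] = (C m)%:R.
Proof.
rewrite /coef_sum; under eq_bigr do rewrite mcoeffX.
have [Cm|nCm] := boolP (C m); last first.
  rewrite big1 // => m' _; have [<-|_] := eqVneq m m'; last by rewrite mulr0.
  by rewrite (negbTE nCm) mul0r.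
rewrite (bigD1 (BMultinom (C_bounded Cm))) //= Cm eqxx mulr1 big1 ?addr0 // => m' m'm.
by rewrite [m == _](_ : _ = false) ?mulr0 //; apply: contraNF m'm => /eqP mm'; apply/eqP/val_inj.
Qed.

Lemma coef_sumZ c p : coef_sum (c *: p) = c * coef_sum p.
Proof. by rewrite /coef_sum big_distrr; apply: eq_bigr => m _; rewrite mcoeffZ mulrCA. Qed.

Lemma coef_sum_ideal : (forall a q, P q -> coef_sum ('X_[a] * q) = 0) ->
  forall p, I p -> coef_sum p = 0.
Proof.
have coef_sum_big := big_morph coef_sum coef_sumD coef_sum0.
move=> CP _ [s [Ps ->]]; rewrite coef_sum_big big1_seq // => q /andP[_ /Ps Pq].
rewrite (mpolyE q.1) big_distrl coef_sum_big big1 // => a _.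
change (coef_sum ((q.1@_a *: 'X_[a]) * q.2) = 0).
by rewrite -scalerAl coef_sumZ CP ?mulr0.
Qed.

Lemma coef_sum_lead p m : is_lead le p m -> C m -> (forall m', C m' -> le m m') ->
  coef_sum p = p@_m.
Proof.
have [[_ le_anti _ _] _] := le_order.
move=> [_ lead_m] Cm m_min; rewrite /coef_sum (bigD1 (BMultinom (C_bounded Cm))) //= Cm mul1r.
rewrite big1 ?addr0 // => m' m'm; have [Cm'|] := boolP (C m'); last by rewrite mul0r.
rewrite mul1r; apply/eqP; rewrite -[_ == 0]negbK -mcoeff_msupp; apply/negP => /lead_m m'_le.
have m'E : val m' = m by apply: le_anti; rewrite m'_le m_min.
by move: m'm; rewrite -val_eqE /= m'E eqxx.
Qed.

Lemma exists_min_mnm m : C m -> exists2 m0, C m0 & forall m', C m' -> le m0 m'.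
Proof.
have [[_ _ le_tr le_total] _] := le_order.
pose s := [seq val x | x <- enum [pred x : 'X_{1..n < b} | C x]].
have memC y : (y \in s) = C y.
  apply/mapP/idP => [[x + ->]|Cy]; first by rewrite mem_enum.
  by exists (BMultinom (C_bounded Cy)); rewrite ?mem_enum.
move=> Cm; have [|m0] := exists_seq_min le_total le_tr (_ : m \in s); rewrite ?memC //.
by move=> Cm0 m0_min; exists m0 => // y Cy; apply: m0_min; rewrite memC.
Qed.

Lemma min_not_in_initial m : (forall a q, P q -> coef_sum ('X_[a] * q) = 0) ->
  C m -> (forall m', C m' -> le m m') -> ~ initial 'X_[m].
Proof.
move=> CP Cm m_min [s [s_lead Xm]].
have /hasP[q qs] : has (fun q => (q.1 * q.2)@_m != 0) s.
  apply: contraT => /hasPn zero; move/eqP: (@mcoeffX _ K m m).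
  by rewrite Xm raddf_sum eqxx big1_seq 1?eq_sym ?oner_eq0 // => q /andP[_ /zero/negPn/eqP].
have [f [l [If [_ [lead_l ->]]]]] := s_lead q qs.
rewrite -mcoeff_msupp (perm_mem (msuppMX _ _)) => /mapP[a _ mE].
have lead_fa : is_lead le (f * 'X_[a]) m by rewrite mE addmC; apply: is_lead_mulX.
have := coef_sum_ideal CP (in_idealMl 'X_[a] If).
rewrite mulrC (coef_sum_lead lead_fa Cm m_min) mE addmC mcoeffMX => fl0.
by case: lead_l; rewrite mcoeff_msupp fl0 eqxx.
Qed.

End CoefficientSum.

End InitialIdeal.

Lemma mnm_units n (m : 'X_{1..n}) :
  exists2 s : seq 'I_n, size s = mdeg m & m = (\sum_(i <- s) U_(i))%MM.
Proof.
move mN: (mdeg m) => N; elim: N m mN => [|N IHN] m mN.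
  by exists [::]; rewrite ?big_nil //; apply/eqP; rewrite -mdeg_eq0 mN.
have [i mi_gt0] : exists i, (0 < m i)%N.
  apply/existsP; apply: contraTT isT => /existsPn m0; move: mN.
  by rewrite mdegE big1 // => i _; apply/eqP; rewrite -leqn0 leqNgt m0.
have Ui_le : (U_(i) <= m)%MM by apply/mnm_lepP => j; rewrite mnm1E; case: eqP => // <-.
have [|s s_size sE] := IHN (m - U_(i))%MM.
  by move: mN; rewrite -{1}(submK Ui_le) mdegD mdeg1 addn1 => -[].
exists (i :: s); first by rewrite /= s_size.
by rewrite big_cons addmC -sE submK.
Qed.

Section ColoringMonomial.
Variables (K : fieldType) (d : nat) (G : rel 'I_d).
Local Notation n := (nv G).

Lemma stableb0 : stableb G set0.
Proof. by apply/forallP => u; rewrite in_set0. Qed.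

Definition stab0 : stab G := exist _ set0 stableb0.

(* Non-stable sets get the junk index of the variable x_set0. *)
Definition xvar (S : {set 'I_d}) : 'I_n := enum_rank (insubd stab0 S).

Lemma xset_xvar S : stableb G S -> xset K G S = 'X_(xvar S).
Proof. by move=> SG; rewrite /xset /xvar /insubd; case: insubP => //=; rewrite SG. Qed.

Lemma xvar_val (S : stab G) : xvar (val S) = enum_rank S.
Proof. by rewrite /xvar valKd. Qed.

Lemma xvar_inj S T : stableb G S -> stableb G T -> xvar S = xvar T -> S = T.
Proof. by move=> SG TG /enum_rank_inj/(congr1 val); rewrite !insubdK. Qed.

Variables (k : nat) (W : {set 'I_d}).
Implicit Types f g : 'I_d -> 'I_k.

Definition color_class f (l : 'I_k) := [set v in W | f v == l].

Definition coloring_mnm f : 'X_{1..n} := (\sum_(l < k) U_(xvar (color_class f l)))%MM.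

Definition coloring_mnm_off f (i j : 'I_k) : 'X_{1..n} :=
  (\sum_(l | (l != i) && (l != j)) U_(xvar (color_class f l)))%MM.

Lemma stable_color_class f l : coloring G W f -> stableb G (color_class f l).
Proof.
move=> fW; apply/forallP => u; apply/implyP; rewrite inE => /andP[uW /eqP fu].
apply/forallP => v; apply/implyP; rewrite inE => /andP[vW /eqP fv].
by apply: contraTN (eqxx l) => /(fW u v uW vW); rewrite fu fv.
Qed.

Lemma xf_coloring_mnm f : coloring G W f -> xf K G W f = 'X_[coloring_mnm f].
Proof.
move=> fW; rewrite /xf /coloring_mnm (big_morph _ (@mpolyXD _ _) (@mpolyX0 _ _)).
by apply: eq_bigr => l _; rewrite xset_xvar //; apply: stable_color_class.
Qed.

Lemma mdeg_coloring_mnm f : mdeg (coloring_mnm f) = k.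
Proof.
by rewrite mdeg_sum; under eq_bigr do rewrite mdeg1; rewrite sum1_card card_ord.
Qed.

Lemma eq_in_color_class f g : {in W, f =1 g} -> color_class f =1 color_class g.
Proof. by move=> fg l; apply/setP => v; rewrite !inE; case: (boolP (v \in W)) => // /fg->. Qed.

Lemma eq_in_coloring_mnm f g : {in W, f =1 g} -> coloring_mnm f = coloring_mnm g.
Proof. by move/eq_in_color_class => fg; apply: eq_bigr => l _; rewrite fg. Qed.

Lemma coloring_mnmE2 f i j : i != j -> coloring_mnm f =
  (coloring_mnm_off f i j + U_(xvar (color_class f i)) + U_(xvar (color_class f j)))%MM.
Proof.
move=> ij; rewrite /coloring_mnm (bigD1 i) //= (bigD1 j) 1?eq_sym //=.
by rewrite addmA addmC addmA.
Qed.

Lemma color_class_extract f (P : pred 'I_k) a A : stableb G A ->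
  coloring G W f ->
  (\sum_(l | P l) U_(xvar (color_class f l)) = a + U_(xvar A))%MM ->
  exists i, [/\ P i, color_class f i = A &
    (\sum_(l | P l && (l != i)) U_(xvar (color_class f l)) = a)%MM].
Proof.
move=> AG fW sumE.
have [i /andP[Pi /eqP iA]] : exists i, P i && (xvar (color_class f i) == xvar A).
  apply/existsP; apply: contraTT isT => /existsPn none.
  have /(congr1 (fun m : 'X_{1..n} => m (xvar A))) := sumE.
  rewrite mnmDE mnm1E eqxx addn1 mnm_sumE big1 // => l Pl.
  by rewrite mnm1E; have := none l; rewrite Pl /= => /negbTE->.
exists i; split=> //; first by apply: xvar_inj iA => //; apply: stable_color_class.
apply: (@addIm _ (U_(xvar A))%MM); rewrite -sumE [RHS](bigD1 i) //= iA addmC.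
by congr (_ + _)%MM; apply: eq_bigl => l; rewrite andbC.
Qed.

Lemma coloring_mnm_extract f a A B : coloring G W f -> stableb G A -> stableb G B ->
  coloring_mnm f = (a + U_(xvar A) + U_(xvar B))%MM ->
  exists i j, [/\ i != j, color_class f i = A, color_class f j = B &
    a = coloring_mnm_off f i j].
Proof.
move=> fW AG BG /(color_class_extract BG fW) [j [_ fj sumE]].
have {}sumE : (\sum_(l | l != j) U_(xvar (color_class f l)) = a + U_(xvar A))%MM by [].
have [i [ij fi <-]] := color_class_extract AG fW sumE.
by exists i, j; split=> //; apply: eq_bigl => l; rewrite andbC.
Qed.

End ColoringMonomial.

Lemma ord2_neq0 (x : 'I_2) : x != 0 -> x = 1.
Proof.
case: x => -[|[|//]] lt; last by move=> _; apply/val_inj.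
by rewrite (_ : Ordinal lt = 0) ?eqxx //; apply/val_inj.
Qed.

Lemma coloring_mnm2 d (G : rel 'I_d) W (F : 'I_d -> 'I_2) :
  coloring_mnm G W F = (U_(xvar G (color_class W F 0%R)) + U_(xvar G (color_class W F 1%R)))%MM.
Proof. by rewrite /coloring_mnm big_ord_recr big_ord1. Qed.

Lemma color_class2U d (W2 : {set 'I_d}) (F : 'I_d -> 'I_2) :
  color_class W2 F 0 :|: color_class W2 F 1 = W2.
Proof.
apply/setP => v; rewrite !inE -andb_orr; case: (v \in W2) => //=.
by have [//|/ord2_neq0->] := eqVneq (F v) 0; rewrite eqxx orbT.
Qed.

Section SwapColors.
Variables (k : nat) (i j : 'I_k).

Lemma swap_colK : involutive (swap_col i j).
Proof.
move=> c; rewrite /swap_col; have [->|ci] := eqVneq c i.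
  by rewrite eqxx; have [->|_] := eqVneq j i; rewrite ?eqxx.
by have [->|cj] := eqVneq c j; rewrite ?eqxx // (negbTE ci) (negbTE cj).
Qed.

Lemma swap_colC : swap_col i j =1 swap_col j i.
Proof. by move=> c; rewrite /swap_col; have [->|//] := eqVneq c i; case: eqP => [->|]. Qed.

Lemma swap_col_out c : ~~ ((c == i) || (c == j)) -> swap_col i j c = c.
Proof. by rewrite /swap_col; case/norP => /negbTE-> /negbTE->. Qed.

Lemma swap_col_pair c :
  ((swap_col i j c == i) || (swap_col i j c == j)) = ((c == i) || (c == j)).
Proof.
have [cij|ncij] := boolP ((c == i) || (c == j)); last by rewrite swap_col_out // (negbTE ncij).
rewrite /swap_col; case/orP: cij => /eqP->; rewrite !eqxx ?orbT //.
by case: ifP; rewrite eqxx ?orbT.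
Qed.

Lemma pair_eq_or_swap c c' : (c == i) || (c == j) -> (c' == i) || (c' == j) ->
  (c' == c) || (c' == swap_col i j c).
Proof.
rewrite /swap_col => /orP[]/eqP-> /orP[]/eqP->; rewrite !eqxx ?orbT //.
by rewrite eq_sym; case: eqP => [->|]; rewrite ?eqxx ?orbT.
Qed.

End SwapColors.

Definition recolors_pair d k (W : {set 'I_d}) (i j : 'I_k) (f f' : 'I_d -> 'I_k) : Prop :=
  {in W, forall v, (f' v == f v) || (f' v == swap_col i j (f v))}.

Section KempeChain.
Variables (d k : nat) (G : rel 'I_d) (W : {set 'I_d}) (i j : 'I_k).
Implicit Types f : 'I_d -> 'I_k.

Definition bicolored f := [set u in W | (f u == i) || (f u == j)].

Definition kempe_rel f := [rel a b | [&& a \in bicolored f, b \in bicolored f & G a b]].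

Definition kempe_chain f v := [set u | connect (kempe_rel f) v u].

Definition kempe_flip f v u := if u \in kempe_chain f v then swap_col i j (f u) else f u.

Lemma kempe_switch_flip f v : (i < j)%N -> v \in bicolored f ->
  kempe_switch G W f (kempe_flip f v).
Proof.
move=> lt_ij vH; exists i, j, v; split=> // u; rewrite /kempe_flip; first by move->.
by rewrite inE => /andP[/negbTE->].
Qed.

Lemma recolors_pair_bicolored f f' : recolors_pair W i j f f' -> bicolored f' = bicolored f.
Proof.
move=> rec; apply/setP => v; rewrite !inE; have [vW|//] := boolP (v \in W).
by case/orP: (rec v vW) => /eqP->; rewrite ?swap_col_pair.
Qed.

Lemma recolors_pair_moved f f' v : recolors_pair W i j f f' -> v \in W -> f' v != f v ->
  v \in bicolored f.
Proof.
move=> rec vW; rewrite inE vW /=; apply: contraR => fv.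
by have := rec v vW; rewrite swap_col_out // orbb.
Qed.

Lemma kempe_chain_bicolored f v u : v \in bicolored f -> u \in kempe_chain f v ->
  u \in bicolored f.
Proof.
move=> vH; rewrite inE => /closed_connect <- //.
by move=> a b /and3P[-> -> _].
Qed.

Lemma kempe_flip_coloring f v : ssrbool.symmetric G -> coloring G W f -> v \in bicolored f ->
  coloring G W (kempe_flip f v).
Proof.
move=> symG fW vH; set C := kempe_chain f v.
have across u w : u \in C -> w \in W -> w \notin C -> G u w ->
    kempe_flip f v u != kempe_flip f v w.
  move=> uC wW wC uw; rewrite /kempe_flip uC (negbTE wC).
  have uH := kempe_chain_bicolored vH uC.
  have wH : w \notin bicolored f.
    apply: contra wC => wH; rewrite inE; apply: (connect_trans (y := u)).
      by move: uC; rewrite inE.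
    by apply: connect1; rewrite /= uH wH.
  apply: contra wH => /eqP fuw; rewrite inE wW -fuw swap_col_pair.
  by move: uH; rewrite inE => /andP[].
move=> u w uW wW uw.
have [uC|nuC] := boolP (u \in C); have [wC|nwC] := boolP (w \in C).
- by rewrite /kempe_flip uC wC (inj_eq (can_inj (swap_colK i j))) fW.
- exact: across.
- by rewrite eq_sym across // symG.
- by rewrite /kempe_flip (negbTE nuC) (negbTE nwC) fW.
Qed.

Section FlipTowards.
Variables (f f' : 'I_d -> 'I_k) (v : 'I_d).
Hypotheses (fW : coloring G W f) (f'W : coloring G W f') (rec : recolors_pair W i j f f').
Hypotheses (vW : v \in W) (f'v : f' v != f v).

Lemma kempe_chain_swap : {in kempe_chain f v, forall u, f' u = swap_col i j (f u)}.
Proof.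
have pair_f' u : u \in bicolored f -> (f' u == i) || (f' u == j).
  by rewrite -(recolors_pair_bicolored rec) inE => /andP[].
have swap_edge g a b : coloring G W g -> a \in W -> b \in W -> G a b ->
    (g a == i) || (g a == j) -> (g b == i) || (g b == j) -> g b = swap_col i j (g a).
  move=> gW aW bW ab ga gb; case/orP: (pair_eq_or_swap ga gb) => /eqP // gab.
  by have := gW a b aW bW ab; rewrite gab eqxx.
have cl : closed (kempe_rel f) [pred u | f' u == swap_col i j (f u)].
  move=> a b /and3P[aH bH ab]; have := aH; have := bH; rewrite !inE.
  move=> /andP[bW fb] /andP[aW fa].
  have f'ab := swap_edge f' a b f'W aW bW ab (pair_f' a aH) (pair_f' b bH).
  rewrite (swap_edge f a b) // f'ab -[in RHS](inj_eq (can_inj (swap_colK i j))).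
  by rewrite !swap_colK.
move=> u; rewrite inE => vu; apply/eqP.
have := closed_connect cl vu; rewrite !inE => <-.
by case/orP: (rec vW) => // fvv; move: f'v; rewrite fvv.
Qed.

Lemma kempe_flip_chain : {in kempe_chain f v, kempe_flip f v =1 f'}.
Proof. by move=> u uC; rewrite /kempe_flip uC kempe_chain_swap. Qed.

Lemma recolors_pair_flip : recolors_pair W i j (kempe_flip f v) f'.
Proof.
move=> u uW; have [uC|uC] := boolP (u \in kempe_chain f v).
  by rewrite kempe_flip_chain ?eqxx.
by rewrite /kempe_flip (negbTE uC); apply: rec.
Qed.

Lemma kempe_flip_disagreement :
  [set u in W | kempe_flip f v u != f' u] \subset [set u in W | f u != f' u] :\ v.
Proof.
apply/subsetP => u; rewrite !inE => /andP[uW]; have [uC|uC] := boolP (u \in kempe_chain f v).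
  by rewrite kempe_flip_chain ?eqxx.
rewrite /kempe_flip (negbTE uC) uW => ->; rewrite !andbT; apply: contraNneq _ uC => ->.
by rewrite inE connect0.
Qed.

End FlipTowards.

End KempeChain.

Section PairRecoloring.
Variables (K : fieldType) (d k : nat) (G : rel 'I_d) (W : {set 'I_d}) (i j : 'I_k).
Hypothesis ij : i != j.
Implicit Types f : 'I_d -> 'I_k.
Local Notation B f := (bicolored W i j f).

Definition two_coloring f : 'I_d -> 'I_2 := fun v => if f v == i then 0 else 1.

Definition recolor f (F : 'I_d -> 'I_2) v :=
  if v \in B f then (if F v == 0 then i else j) else f v.

Lemma bicoloredE f : B f = color_class W f i :|: color_class W f j.
Proof. by apply/setP => v; rewrite !inE andb_orr. Qed.

Lemma coloring_mnm_two_coloring f : coloring_mnm G (B f) (two_coloring f) =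
  (U_(xvar G (color_class W f i)) + U_(xvar G (color_class W f j)))%MM.
Proof.
have [n01 n10] : (0 == 1 :> 'I_2) = false /\ (1 == 0 :> 'I_2) = false by [].
rewrite coloring_mnm2; congr (U_(xvar G _) + U_(xvar G _))%MM; apply/setP => v;
  rewrite !inE /two_coloring; case: (v \in W) => //=; have [->|] := eqVneq (f v) i.
all: by rewrite ?eqxx ?n01 ?n10 ?(negbTE ij) ?andbT ?andbF.
Qed.

Lemma coloring_mnm_bicolored f : coloring_mnm G W f =
  (coloring_mnm_off G W f i j + coloring_mnm G (B f) (two_coloring f))%MM.
Proof. by rewrite (coloring_mnmE2 G W f ij) coloring_mnm_two_coloring addmA. Qed.

Lemma two_coloring_coloring f : coloring G W f -> coloring G (B f) (two_coloring f).
Proof.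
move=> fW u w; rewrite !inE => /andP[uW fu] /andP[wW fw] uw.
have := fW u w uW wW uw; rewrite /two_coloring.
by case/orP: fu => /eqP->; case/orP: fw => /eqP->; rewrite ?eqxx // [j == i]eq_sym (negbTE ij).
Qed.

Lemma recolors_pair_color_class f f' l : recolors_pair W i j f f' -> l != i -> l != j ->
  color_class W f' l = color_class W f l.
Proof.
move=> rec li lj; apply/setP => v; rewrite !inE; have [vW|//] := boolP (v \in W).
case/orP: (rec v vW) => /eqP-> //=.
have [fv|/swap_col_out->//] := boolP ((f v == i) || (f v == j)).
have := fv; rewrite -(swap_col_pair i j).
by case/orP => /eqP->; case/orP: fv => /eqP->; rewrite ![_ == l]eq_sym ?(negbTE li) ?(negbTE lj).
Qed.

Lemma recolors_pair_off f f' : recolors_pair W i j f f' ->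
  coloring_mnm_off G W f' i j = coloring_mnm_off G W f i j.
Proof.
by move=> rec; apply: eq_bigr => l /andP[li lj]; rewrite (recolors_pair_color_class rec).
Qed.

Lemma recolors_pair_coloring f f' : coloring G W f -> recolors_pair W i j f f' ->
  coloring G (B f) (two_coloring f') -> coloring G W f'.
Proof.
move=> fW rec f'B.
have pair_f' u : u \in B f -> (f' u == i) || (f' u == j).
  by rewrite -(recolors_pair_bicolored rec) inE => /andP[].
have out u : u \in W -> u \notin B f -> f' u = f u.
  move=> uW uB; have := rec u uW; rewrite swap_col_out ?orbb => [/eqP//|].
  by move: uB; rewrite inE uW.
have across u w : u \in B f -> w \in W -> w \notin B f -> f' u != f' w.
  move=> uB wW wB; apply: contra wB => /eqP fuw.
  by rewrite -(recolors_pair_bicolored rec) inE wW -fuw pair_f'.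
move=> u w uW wW uw; have [uB|uB] := boolP (u \in B f); have [wB|wB] := boolP (w \in B f).
- by apply: contraNneq (f'B u w uB wB uw); rewrite /two_coloring => ->.
- exact: across.
- by rewrite eq_sym across.
- by rewrite !out // fW.
Qed.

Lemma recolors_pair_KG f f' : coloring G W f -> coloring G W f' ->
  recolors_pair W i j f f' -> in_KG (xf K G W f - xf K G W f').
Proof.
move=> fW f'W rec; have B_f' := recolors_pair_bicolored rec.
have FW := two_coloring_coloring fW; have F'W := two_coloring_coloring f'W.
rewrite B_f' in F'W.
rewrite !xf_coloring_mnm // coloring_mnm_bicolored (coloring_mnm_bicolored f') B_f'.
rewrite (recolors_pair_off rec) !mpolyXD -mulrBr; apply/in_idealMl/in_ideal_gen; left.
by exists (B f), (two_coloring f), (two_coloring f'); rewrite !xf_coloring_mnm.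
Qed.

Lemma recolors_pair_recolor f F : recolors_pair W i j f (recolor f F).
Proof.
move=> v vW; rewrite /recolor; case: ifP => [vB|_]; last by rewrite eqxx.
apply: pair_eq_or_swap; first by move: vB; rewrite inE => /andP[].
by case: ifP; rewrite eqxx ?orbT.
Qed.

Lemma two_coloring_recolor f F : {in B f, two_coloring (recolor f F) =1 F}.
Proof.
move=> v vB; rewrite /two_coloring /recolor vB.
by have [->|/ord2_neq0->] := eqVneq (F v) 0; rewrite ?eqxx // [j == i]eq_sym (negbTE ij).
Qed.

End PairRecoloring.

Section KempeEquivalence.
Variables (d k : nat) (G : rel 'I_d) (W : {set 'I_d}).
Implicit Types f g : 'I_d -> 'I_k.

Lemma kempe_switch_recolors_pair f g : kempe_switch G W f g ->
  exists i j, i != j /\ recolors_pair W i j f g.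
Proof.
move=> [i [j [v /= [lt_ij _ gC gW]]]]; exists i, j; split; first by rewrite neq_ltn lt_ij.
move=> u uW; have [uC|uC] := boolP (u \in kempe_chain G W i j f v).
  by rewrite (gC u uC) eqxx orbT.
by rewrite (gW u) ?eqxx //; apply/setDP.
Qed.

Lemma kempe_eq_KG (K : fieldType) f g : kempe_eq G W f g -> in_KG (xf K G W f - xf K G W g).
Proof.
elim=> {f g} [f g [fW [gW [/kempe_switch_recolors_pair[i [j [ij rec]]]|fg]]]|f|f g _ IH|
               f g h _ IH1 _ IH2].
- exact: (recolors_pair_KG K ij).
- by rewrite !xf_coloring_mnm // (eq_in_coloring_mnm G fg) subrr; apply: in_ideal0.
- by rewrite subrr; apply: in_ideal0.
- by rewrite -opprB; apply: in_idealN.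
- by rewrite -(subrKA (xf K G W g)); apply: in_idealD.
Qed.

Hypothesis symG : ssrbool.symmetric G.

Lemma kempe_eq_recolors_pair (i j : 'I_k) f f' : i != j ->
  coloring G W f -> coloring G W f' -> recolors_pair W i j f f' -> kempe_eq G W f f'.
Proof.
wlog lt_ij : i j / (i < j)%N => [hwlog ij|_].
  case: (ltngtP i j) => [lt_ij|gt_ij|/val_inj eq_ij]; first exact: hwlog lt_ij ij.
    move=> fW f'W rec; apply: (hwlog j i) => //; first by rewrite eq_sym.
    by move=> v /rec; rewrite swap_colC.
  by rewrite eq_ij eqxx in ij.
move=> fW f'W; have [N] := ubnP #|[set v in W | f v != f' v]|.
elim: N f fW => // N IHN f fW; rewrite ltnS => le_N rec.
have [D0|[v v_diff]] := set_0Vmem [set v in W | f v != f' v].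
  apply: rst_step; split=> //; split=> //; right=> v vW; apply/eqP/negPn/negP => fv.
  by have := in_set0 v; rewrite -D0 inE vW fv.
have := v_diff; rewrite inE eq_sym => /andP[vW fv].
have vH := recolors_pair_moved rec vW fv.
have f1W := kempe_flip_coloring symG fW vH.
apply: (rst_trans _ _ _ (kempe_flip G W i j f v)).
  by apply: rst_step; split=> //; split=> //; left; apply: kempe_switch_flip.
apply: IHN (recolors_pair_flip fW f'W rec vW fv) => //.
apply: leq_trans _ le_N; rewrite [X in (_ < X)%N](cardsD1 v) v_diff add1n ltnS.
exact/subset_leq_card/kempe_flip_disagreement.
Qed.

End KempeEquivalence.

Lemma kempe_move d k (G : rel 'I_d) W (f : 'I_d -> 'I_k) a W2 (F F' : 'I_d -> 'I_2) :
  ssrbool.symmetric G -> coloring G W f -> coloring G W2 F -> coloring G W2 F' ->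
  coloring_mnm G W f = (a + coloring_mnm G W2 F)%MM ->
  exists f', [/\ coloring G W f', coloring_mnm G W f' = (a + coloring_mnm G W2 F')%MM
               & kempe_eq G W f f'].
Proof.
move=> symG fW FW F'W; rewrite coloring_mnm2 addmA.
case/(coloring_mnm_extract fW (stable_color_class 0 FW) (stable_color_class 1 FW)).
move=> i [j [ij fi fj ->]].
have W2E : W2 = bicolored W i j f by rewrite bicoloredE fi fj color_class2U.
set f' := recolor W i j f F'.
have rec : recolors_pair W i j f f' by apply: recolors_pair_recolor.
have two : {in bicolored W i j f, two_coloring i f' =1 F'} by apply: two_coloring_recolor.
have f'W : coloring G W f'.
  apply: (recolors_pair_coloring fW rec) => u w uB wB uw.
  by rewrite !two //; apply: F'W; rewrite // W2E.
exists f'; split=> //; last exact: (kempe_eq_recolors_pair symG ij fW f'W rec).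
rewrite (coloring_mnm_bicolored G W ij f') (recolors_pair_off G rec).
rewrite (recolors_pair_bicolored rec) -W2E; congr (_ + _)%MM.
by apply: eq_in_coloring_mnm; rewrite W2E.
Qed.

Section KempeClass.
Variables (K : fieldType) (d k : nat) (G : rel 'I_d).
Hypothesis symG : ssrbool.symmetric G.
Variables (W : {set 'I_d}) (g : 'I_d -> 'I_k).

Definition kempe_class_mnm (m : 'X_{1..nv G}) : bool :=
  `[< exists f, [/\ coloring G W f, coloring_mnm G W f = m & kempe_eq G W f g] >].

Lemma kempe_class_mnm_bounded m : kempe_class_mnm m -> (mdeg m < k.+1)%N.
Proof. by case/asboolP => f [_ <- _]; rewrite mdeg_coloring_mnm. Qed.

Lemma kempe_class_mnm_move a W2 (F F' : 'I_d -> 'I_2) :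
  coloring G W2 F -> coloring G W2 F' ->
  kempe_class_mnm (a + coloring_mnm G W2 F) -> kempe_class_mnm (a + coloring_mnm G W2 F').
Proof.
move=> FW F'W /asboolP[f [fW fm fg]].
have [f' [f'W f'm ff']] := kempe_move symG fW FW F'W fm.
by apply/asboolP; exists f'; split=> //; apply: rst_trans (rst_sym _ _ _ _ ff') fg.
Qed.

Lemma kempe_class_mnm_overlap a (S T : stab G) : val S :&: val T != set0 ->
  ~~ kempe_class_mnm (a + U_(enum_rank S) + U_(enum_rank T)).
Proof.
move=> ST; apply/asboolP => -[f [fW fm _]]; rewrite -!xvar_val in fm.
have [i [j [ij fi fj _]]] := coloring_mnm_extract fW (valP S) (valP T) fm.
case/set0Pn: ST => v; rewrite inE -fi -fj !inE => /andP[/andP[_ /eqP fvi] /andP[_ /eqP fvj]].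
by rewrite -fvi -fvj eqxx in ij.
Qed.

Lemma coef_sum_kempe_class a (q : {mpoly K[nv G]}) : J_gen q \/ M_gen q ->
  coef_sum k.+1 kempe_class_mnm ('X_[a] * q) = 0.
Proof.
have coef_sumX := coef_sumX K kempe_class_mnm_bounded.
case=> [[W2 [F [F' [FW [F'W ->]]]]]|[S [T [ST ->]]]].
  rewrite !xf_coloring_mnm // mulrBr -!mpolyXD coef_sumB !coef_sumX.
  suff -> : kempe_class_mnm (a + coloring_mnm G W2 F) =
            kempe_class_mnm (a + coloring_mnm G W2 F') by rewrite subrr.
  by apply/idP/idP; apply: kempe_class_mnm_move.
by rewrite /xS mulrA -!mpolyXD coef_sumX (negbTE (kempe_class_mnm_overlap _ ST)).
Qed.

Lemma kempe_class_min_standard le m : monomial_order le -> kempe_class_mnm m ->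
  (forall m', kempe_class_mnm m' -> le m m') -> standard_deg K le k m.
Proof.
move=> le_order Cm m_min; split.
  by case/asboolP: Cm => f [_ <- _]; rewrite mdeg_coloring_mnm.
exact: (min_not_in_initial le_order kempe_class_mnm_bounded coef_sum_kempe_class Cm m_min).
Qed.

End KempeClass.

Lemma standard_disjoint_stable K d (G : rel 'I_d) k le m : monomial_order le ->
  standard_deg K le k m ->
  exists S : 'I_k -> stab G,
    (forall l1 l2, l1 != l2 -> [disjoint val (S l1) & val (S l2)]) /\
    'X_[m] = \prod_(l < k) xS K (S l).
Proof.
move=> le_order [mk m_std]; have [s s_size sE] := mnm_units m.
pose S l := enum_val (nth (enum_rank (stab0 G)) s l).
have mE : m = (\sum_(l < k) U_(enum_rank (S l)))%MM.
  rewrite sE (big_nth (enum_rank (stab0 G))) s_size mk big_mkord.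
  by apply: eq_bigr => l _; rewrite enum_valK.
exists S; split; last by rewrite mE (big_morph _ (@mpolyXD _ _) (@mpolyX0 _ _)).
move=> l1 l2 l12; rewrite -setI_eq0; apply: contraT => S12.
case: m_std; apply: (in_initialX le_order).
rewrite mE (bigD1 l1) //= (bigD1 l2) 1?eq_sym //= addmA addmC !mpolyXD.
by apply/in_idealMl/in_ideal_gen; right; exists (S l1), (S l2).
Qed.

Theorem theorem6p6 (K : fieldType) (d : nat) (G : rel 'I_d) (k : nat)
  (le : rel 'X_{1..nv G}) :
  simple_graph G -> (1 <= k)%N -> monomial_order le ->
  (* each standard monomial of degree k is x_{S_1} ... x_{S_k} with
     S_1, ..., S_k pairwise disjoint stable sets *)
  (forall m, standard_deg K le k m ->
     exists S : 'I_k -> stab G,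
       (forall l1 l2, l1 != l2 -> [disjoint val (S l1) & val (S l2)]) /\
       'X_[m] = \prod_(l < k) xS K (S l))
  /\
  (* for every induced subgraph G[W], every Kempe class of k-colorings of G[W]
     contains (a coloring f_i of) exactly one standard monomial of degree k *)
  (forall (W : {set 'I_d}) (g : 'I_d -> 'I_k), coloring G W g ->
     exists m, (standard_deg K le k m /\
                exists f, coloring G W f /\ 'X_[m] = xf K G W f /\ kempe_eq G W f g)
       /\ forall m', standard_deg K le k m' ->
            (exists f, coloring G W f /\ 'X_[m'] = xf K G W f /\ kempe_eq G W f g) ->
            m' = m).
Proof.
move=> [symG _] _ le_order; split=> [m|W g gW]; first exact: standard_disjoint_stable.
have g_class : kempe_class_mnm W g (coloring_mnm G W g).
  by apply/asboolP; exists g; split=> //; apply: rst_refl.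
have [m0 m0_class m0_min] := exists_min_mnm le_order (@kempe_class_mnm_bounded _ _ G W g) g_class.
have m0_std := kempe_class_min_standard K symG le_order m0_class m0_min.
have /asboolP[f0 [f0W f0m f0g]] := m0_class.
exists m0; split; first by split=> //; exists f0; rewrite (xf_coloring_mnm K f0W) f0m.
move=> m' m'_std [f' [f'W [m'E f'g]]].
apply: (standard_congr_eq le_order m'_std.2 m0_std.2).
rewrite m'E -f0m -xf_coloring_mnm //; apply: kempe_eq_KG.
exact: rst_trans f'g (rst_sym _ _ _ _ f0g).
Qed.
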